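(* Let $R$ be a ring, $B\in R^{m\times k}$, $B'\in R^{m\times(n-k)}$, and $\phi={}_B\phi_{B'}$. Then \[ \mathrm{Defect}(\mathcal B(\phi,-))\;\cong\;\frac{R^{1\times k}}{\{\,yB\mid y\in R^{1\times m},\ yB'=0\,\}} \] as left $R$-modules.
   Context: Let $R$ be a ring; $R\text{-}\mathbf{mod}$ denotes finitely presented left $R$-modules. $R\text{-}\mathbf{mod}\text{-}\mathbf{mod}$ is the category of finitely presented additive functors $R\text{-}\mathbf{mod}\to\mathbf{Ab}$. If $\mathcal G\in R\text{-}\mathbf{mod}\text{-}\mathbf{mod}$ has a presentation $\operatorname{Hom}(N',-)\xrightarrow{\operatorname{Hom}(\alpha,-)}\operatorname{Hom}(N,-)\to\mathcal G\to0$ with $\alpha:N\to N'$ in $R\text{-}\mathbf{mod}$, its (contravariant) defect is $\mathrm{Defect}(\mathcal G):=\ker(\alpha)$ computed in the category of left $R$-modules; this is well defined up to isomorphism (it is the value at $\mathcal G$ of the unique exact functor $R\text{-}\mathbf{mod}\text{-}\mathbf{mod}\to(R\text{-}\mathbf{Mod})^{\mathrm{op}}$ sending the forgetful functor $\mathcal F=\operatorname{Hom}(R,-)$ to $R^{1\times1}$ and $r:\mathcal F\to\mathcal F$ to right multiplication by $r$). A pp formula ${}_B\phi_{B'}$ is given by $B\in R^{m\times k}$, $B'\in R^{m\times(n-k)}$, and $\mathcal B(\phi,M)=\{\omega\in M^{k\times1}\mid\exists\,\omega'\in M^{(n-k)\times1}: B\omega+B'\omega'=0\}$; $\mathcal B(\phi,-)$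 (restricted to $R\text{-}\mathbf{mod}$) lies in $R\text{-}\mathbf{mod}\text{-}\mathbf{mod}$. *)

From HB Require Import structures.
From mathcomp Require Import all_boot all_order all_algebra.
Set Implicit Arguments. Unset Strict Implicit. Unset Printing Implicit Defensive.
Import GRing.Theory.
Local Open Scope ring_scope.

(* Left R-modules are [lmodType R]; R^{1 x k} is ['rV[R]_k] with left scaling. *)

Definition mxact (R : pzRingType) (M : lmodType R) (m k : nat)
  (B : 'M[R]_(m, k)) (w : 'cV[M]_k) : 'cV[M]_m :=
  \col_(i < m) \sum_(j < k) B i j *: w j 0.

(* The pp-definable subgroup  B(phi, M)  for phi = _B phi_B' (with l = n - k). *)
Definition pp_set (R : pzRingType) (m k l : nat)
  (B : 'M[R]_(m, k)) (B' : 'M[R]_(m, l)) (M : lmodType R) (w : 'cV[M]_k) : Prop :=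
  exists w' : 'cV[M]_l, mxact B w + mxact B' w' = 0.

Definition finpres (R : pzRingType) (M : lmodType R) : Prop :=
  exists (n : nat) (v : 'I_n -> M),
    (forall x : M, exists c : 'rV[R]_n, x = \sum_(i < n) c 0 i *: v i) /\
    exists (p : nat) (G : 'M[R]_(p, n)),
      forall c : 'rV[R]_n,
        (\sum_(i < n) c 0 i *: v i = 0) <-> exists d : 'rV[R]_p, c = d *m G.

(* [pi] together with [alpha] is a projective presentation
     Hom(N',-) --Hom(alpha,-)--> Hom(N,-) --pi--> B(phi,-) --> 0
   in R-mod-mod: pi is a natural transformation (on finitely presented M)
   Hom(N,-) -> B(phi,-), each component is onto B(phi,M), and its kernel is
   the image of precomposition with alpha. *)
Definition is_pp_presentation (R : pzRingType) (m k l : nat)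
  (B : 'M[R]_(m, k)) (B' : 'M[R]_(m, l)) (N N' : lmodType R)
  (alpha : {linear N -> N'})
  (pi : forall M : lmodType R, {linear N -> M} -> 'cV[M]_k) : Prop :=
  (forall (M : lmodType R), finpres M ->
     forall h : {linear N -> M}, pp_set B B' (pi M h)) /\
  (forall (M M' : lmodType R), finpres M -> finpres M' ->
     forall (g : {linear M -> M'}) (h : {linear N -> M}) (h' : {linear N -> M'}),
       (forall x, h' x = g (h x)) -> pi M' h' = map_mx g (pi M h)) /\
  (forall (M : lmodType R), finpres M ->
     forall w : 'cV[M]_k, pp_set B B' w -> exists h : {linear N -> M}, pi M h = w) /\
  (forall (M : lmodType R), finpres M ->
     forall h : {linear N -> M},
       pi M h = 0 <-> exists f : {linear N' -> M}, forall x, h x = f (alpha x)).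

(* Let  Hom(N',-) --Hom(alpha,-)--> Hom(N,-) --pi--> B(phi,-) --> 0  be a
   presentation.  By the Yoneda lemma pi is determined by its generic element
   w := pi_N(id_N), a k-tuple of elements of N lying in B(phi,N); indeed
   pi_M(h) = h(w) for every h.  We show that the linear map
       g : R^{1 x k} -> N,   v |-> sum_j v_j w_j
   has image ker(alpha) and kernel {yB | yB' = 0}:
   - alpha(w) = pi_{N'}(alpha) = 0 by exactness, so im g <= ker alpha;
   - the projection q : N -> N/<w> kills w, hence factors through alpha,
     so ker alpha <= <w> = im g;
   - if yB' = 0 then g(yB) = y(Bw) = -y(B'w') = 0, w' witnessing w in B(phi,N);
   - conversely the "free realization" C = R^{1 x (k+l)} / rows[B B'] carries a
     point of B(phi,C) (the images of the first k unit vectors); lifting it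
     along pi gives h with h(w_j) = [e_j], so g v = 0 forces (v,0) to be a
     combination y[B B'], i.e. v = yB and yB' = 0.
   The file first builds quotients of modules by finitely generated submodules
   and shows they stay finitely presented, then analyses the presentation. *)

From HB Require Import structures.
From mathcomp Require Import all_boot all_order all_algebra.
From Stdlib Require Import ClassicalEpsilon FunctionalExtensionality PropExtensionality.
Set Implicit Arguments. Unset Strict Implicit. Unset Printing Implicit Defensive.
Import GRing.Theory.
Local Open Scope ring_scope.

Section LinearCombination.
Variables (R : pzRingType) (V : lmodType R) (n : nat) (v : 'I_n -> V).

Definition lincomb (c : 'rV[R]_n) : V := \sum_j c 0 j *: v j.

Lemma lincomb_is_linear : linear lincomb.
Proof.
move=> a x y; rewrite /lincomb scaler_sumr -big_split /=.
by apply: eq_bigr => j _; rewrite !mxE scalerDl scalerA.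
Qed.

HB.instance Definition _ :=
  GRing.isLinear.Build R 'rV[R]_n V *:%R lincomb lincomb_is_linear.

Lemma lincomb_mul p (e : 'rV[R]_p) (A : 'M[R]_(p, n)) :
  lincomb (e *m A) = \sum_i e 0 i *: lincomb (row i A).
Proof.
rewrite /lincomb; symmetry; under eq_bigr do rewrite scaler_sumr.
rewrite exchange_big /=; apply: eq_bigr => j _.
by rewrite !mxE scaler_suml; apply: eq_bigr => i _; rewrite mxE scalerA.
Qed.

Lemma lincomb_delta i : lincomb 'e_i = v i.
Proof.
rewrite /lincomb (bigD1 i) //= big1 ?addr0 => [|j /negPf nj]; rewrite mxE.
  by rewrite !eqxx scale1r.
by rewrite nj andbF scale0r.
Qed.

End LinearCombination.

Lemma mxactE (R : pzRingType) (M : lmodType R) (m k : nat)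
  (B : 'M[R]_(m, k)) (w : 'cV[M]_k) i :
  mxact B w i 0 = lincomb (fun j => w j 0) (row i B).
Proof. by rewrite mxE; apply: eq_bigr => j _; rewrite mxE. Qed.

Section Quotient.
Variables (R : pzRingType) (V : lmodType R) (p : nat) (u : 'I_p -> V).

Definition in_span (x : V) : Prop := exists c : 'rV[R]_p, x = lincomb u c.

Lemma in_span0 : in_span 0.
Proof. by exists 0; rewrite linear0. Qed.

Lemma in_spanD x y : in_span x -> in_span y -> in_span (x + y).
Proof. by move=> [c ->] [d ->]; exists (c + d); rewrite linearD. Qed.

Lemma in_spanZ a x : in_span x -> in_span (a *: x).
Proof. by move=> [c ->]; exists (a *: c); rewrite linearZ. Qed.

Lemma in_spanN x : in_span x -> in_span (- x).
Proof. by rewrite -scaleN1r; apply: in_spanZ. Qed.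

(* A chosen representative of the coset v + <u>; it depends only on the coset. *)
Definition canon (v : V) : V := epsilon (inhabits 0) (fun w => in_span (w - v)).

Lemma canonP v : in_span (canon v - v).
Proof.
apply: (epsilon_spec (inhabits 0) (fun w => in_span (w - v))).
by exists v; rewrite subrr; apply: in_span0.
Qed.

Lemma canon_eq v w : in_span (v - w) -> canon v = canon w.
Proof.
move=> vw; rewrite /canon; congr epsilon.
apply: functional_extensionality => x; apply: propositional_extensionality.
split => hx.
  by rewrite -(subrKA v); apply: in_spanD.
by rewrite -(subrKA w) -[w - v]opprB; apply: in_spanD => //; apply: in_spanN.
Qed.

Lemma canon_inj v w : canon v = canon w -> in_span (v - w).
Proof.
move=> e; rewrite -(subrKA (canon w)) -e -[v - _]opprB.
by apply: in_spanD; [apply/in_spanN/canonP | rewrite e; apply: canonP].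
Qed.

Definition quot := {x : V | canon x == x}.
HB.instance Definition _ := [isSub of quot for @sval V _].
HB.instance Definition _ := [Choice of quot by <:].

Definition mkQ (v : V) : quot :=
  exist _ (canon v) (introT eqP (canon_eq (canonP v))).

Lemma mkQ_eq v w : mkQ v = mkQ w <-> in_span (v - w).
Proof.
split => [/(congr1 val) /canon_inj // | /canon_eq e].
exact: val_inj.
Qed.

Lemma valQK (a : quot) : mkQ (val a) = a.
Proof. by apply: val_inj => /=; apply/eqP; case: a. Qed.

Lemma mkQ_valDl v w : mkQ (val (mkQ v) + w) = mkQ (v + w).
Proof. by apply/mkQ_eq; rewrite opprD addrACA subrr addr0; apply: canonP. Qed.

Lemma mkQ_valDr v w : mkQ (w + val (mkQ v)) = mkQ (w + v).
Proof. by rewrite addrC mkQ_valDl addrC. Qed.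

Lemma mkQ_valZ a v : mkQ (a *: val (mkQ v)) = mkQ (a *: v).
Proof. by apply/mkQ_eq; rewrite -scalerBr; apply/in_spanZ/canonP. Qed.

Definition addQ (a b : quot) : quot := mkQ (val a + val b).
Definition oppQ (a : quot) : quot := mkQ (- val a).
Definition scaleQ (r : R) (a : quot) : quot := mkQ (r *: val a).

Lemma addQA : associative addQ.
Proof. by move=> a b c; rewrite /addQ mkQ_valDl mkQ_valDr addrA. Qed.

Lemma addQC : commutative addQ.
Proof. by move=> a b; rewrite /addQ addrC. Qed.

Lemma add0Q : left_id (mkQ 0) addQ.
Proof. by move=> a; rewrite /addQ mkQ_valDl add0r valQK. Qed.

Lemma addNQ : left_inverse (mkQ 0) oppQ addQ.
Proof. by move=> a; rewrite /addQ /oppQ mkQ_valDl addNr. Qed.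

HB.instance Definition _ := GRing.isZmodule.Build quot addQA addQC add0Q addNQ.

Lemma addQE (a b : quot) : a + b = mkQ (val a + val b).
Proof. by []. Qed.

Lemma scaleQA a b v : scaleQ a (scaleQ b v) = scaleQ (a * b) v.
Proof. by rewrite /scaleQ mkQ_valZ scalerA. Qed.

Lemma scale1Q : left_id 1 scaleQ.
Proof. by move=> v; rewrite /scaleQ scale1r valQK. Qed.

Lemma scaleQDr : right_distributive scaleQ +%R.
Proof. by move=> a v w; rewrite /scaleQ !addQE mkQ_valZ mkQ_valDl mkQ_valDr scalerDr. Qed.

Lemma scaleQDl v : {morph scaleQ^~ v : a b / a + b}.
Proof. by move=> a b; rewrite /scaleQ addQE mkQ_valDl mkQ_valDr scalerDl. Qed.

HB.instance Definition _ :=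
  GRing.Zmodule_isLmodule.Build R quot scaleQA scale1Q scaleQDr scaleQDl.

Lemma mkQ_is_linear : linear mkQ.
Proof.
move=> a x y; have -> : a *: mkQ x = mkQ (a *: val (mkQ x)) by [].
rewrite addQE mkQ_valDl mkQ_valDr; apply/mkQ_eq.
rewrite opprD addrACA subrr addr0 -scalerBr -opprB scalerN.
exact/in_spanN/in_spanZ/canonP.
Qed.

HB.instance Definition _ := GRing.isLinear.Build R V quot *:%R mkQ mkQ_is_linear.

Lemma mkQ0 x : mkQ x = 0 <-> in_span x.
Proof. by rewrite -(linear0 mkQ) mkQ_eq subr0. Qed.

Lemma mkQ_surj (a : quot) : exists v, mkQ v = a.
Proof. by exists (val a); apply: valQK. Qed.

(* Quotienting a finitely presented module by a finitely generated submodule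
   keeps it finitely presented: add the generators of <u>, rewritten in the
   old generators, to the relations. *)
Lemma finpresQ : finpres V -> finpres quot.
Proof.
move=> [n [v [gen [r [G rel]]]]].
pose a i := epsilon (inhabits 0) (fun c : 'rV[R]_n => u i = lincomb v c).
have ha i : u i = lincomb v (a i).
  exact: (epsilon_spec (inhabits 0) (fun c => u i = lincomb v c) (gen (u i))).
pose A := \matrix_(i < p, j < n) a i 0 j.
have comb (e : 'rV[R]_p) : lincomb u e = lincomb v (e *m A).
  rewrite lincomb_mul; apply: eq_bigr => i _; rewrite ha; congr (_ *: _).
  by congr lincomb; apply/rowP => j; rewrite !mxE.
have E (c : 'rV[R]_n) : \sum_i c 0 i *: mkQ (v i) = mkQ (lincomb v c).
  by rewrite linear_sum; apply: eq_bigr => i _; rewrite linearZ.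
exists n, (fun i => mkQ (v i)); split.
  move=> x; have [y <-] := mkQ_surj x; have [c ->] := gen y.
  by exists c; rewrite E.
exists (r + p)%N, (col_mx G A) => c; rewrite E mkQ0; split.
  move=> [e he].
  have /rel [d hd] : lincomb v (c - e *m A) = 0.
    by rewrite linearB /= -comb -he subrr.
  by exists (row_mx d e); rewrite mul_row_col -hd subrK.
move=> [d ->]; rewrite -[d]hsubmxK mul_row_col; exists (rsubmx d).
have G0 : lincomb v (lsubmx d *m G) = 0 by apply/rel; exists (lsubmx d).
by rewrite comb linearD /= G0 add0r.
Qed.

End Quotient.

Lemma finpres_row (R : pzRingType) (n : nat) : finpres 'rV[R]_n.
Proof.
exists n, (fun j => 'e_j); split.
  by move=> x; exists x; apply: row_sum_delta.
exists 0%N, 0 => c; rewrite -row_sum_delta; split.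
  by move=> ->; exists 0; rewrite mul0mx.
by move=> [d ->]; rewrite thinmx0 mul0mx.
Qed.

Lemma row_row_mx (R : pzRingType) m k l (B : 'M[R]_(m, k)) (B' : 'M[R]_(m, l)) i :
  row i (row_mx B B') =
  \sum_j B i j *: 'e_(lshift l j) + \sum_j B' i j *: 'e_(rshift k j).
Proof.
rewrite {1}[row i _]row_sum_delta big_split_ord /=.
by congr (_ + _); apply: eq_bigr => j _; rewrite mxE ?row_mxEl ?row_mxEr.
Qed.

Lemma row_mx_v0 (R : pzRingType) k l (v : 'rV[R]_k) :
  row_mx v (0 : 'rV[R]_l) = \sum_j v 0 j *: 'e_(lshift l j).
Proof.
rewrite {1}[row_mx v 0]row_sum_delta big_split_ord /=.
rewrite [X in _ + X]big1 ?addr0 => [|j _]; last by rewrite row_mxEr mxE scale0r.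
by apply: eq_bigr => j _; rewrite row_mxEl.
Qed.

Section FreeRealization.
Variables (R : pzRingType) (m k l : nat) (B : 'M[R]_(m, k)) (B' : 'M[R]_(m, l)).

Definition rel_rows (i : 'I_m) : 'rV[R]_(k + l) := row i (row_mx B B').

Definition free_realization := quot rel_rows.

Definition free_point : 'cV[free_realization]_k :=
  \col_j mkQ rel_rows 'e_(lshift l j).

Lemma free_point_pp : pp_set B B' free_point.
Proof.
exists (\col_j mkQ rel_rows 'e_(rshift k j)); apply/matrixP => i j.
rewrite (ord1 j) !mxE.
have -> : \sum_j0 B i j0 *: free_point j0 0 +
          \sum_j0 B' i j0 *: (\col_j mkQ rel_rows 'e_(rshift k j)) j0 0 =
          mkQ rel_rows (rel_rows i).
  rewrite /rel_rows row_row_mx linearD !linear_sum /=.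
  by congr (_ + _); apply: eq_bigr => j0 _; rewrite mxE linearZ.
by apply/mkQ0; exists 'e_i; rewrite lincomb_delta.
Qed.

Lemma free_realization_rel (v : 'rV[R]_k) :
  mkQ rel_rows (row_mx v 0) = 0 -> exists y : 'rV[R]_m, y *m B' = 0 /\ v = y *m B.
Proof.
move/mkQ0 => [y]; rewrite /lincomb /rel_rows -mulmx_sum_row mul_mx_row.
by move/eq_row_mx => [vB B0]; exists y.
Qed.

End FreeRealization.

Section Presentation.
Variables (R : pzRingType) (m k l : nat) (B : 'M[R]_(m, k)) (B' : 'M[R]_(m, l)).
Variables (N N' : lmodType R) (alpha : {linear N -> N'}).
Variable pi : forall M : lmodType R, {linear N -> M} -> 'cV[M]_k.
Hypotheses (fpN : finpres N) (fpN' : finpres N').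
Hypothesis pres : is_pp_presentation B B' alpha pi.

Definition generic : 'cV[N]_k := pi (idfun : {linear N -> N}).
Definition gen_elt (j : 'I_k) : N := generic j 0.

Lemma pi_generic (M : lmodType R) (h : {linear N -> M}) :
  finpres M -> pi h = map_mx h generic.
Proof.
by move=> fpM; have [_ [naturality _]] := pres; apply: naturality.
Qed.

Lemma alpha_gen_elt j : alpha (gen_elt j) = 0.
Proof.
have [_ [_ [_ exactness]]] := pres.
have /(exactness _ fpN') : exists f : {linear N' -> N'}, forall x, alpha x = f (alpha x).
  by exists idfun.
rewrite pi_generic // => /matrixP /(_ j 0).
by rewrite !mxE.
Qed.

Lemma alpha_lincomb (v : 'rV[R]_k) : alpha (lincomb gen_elt v) = 0.
Proof.
rewrite linear_sum big1 // => j _.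
by rewrite linearZ /= alpha_gen_elt scaler0.
Qed.

Lemma ker_alpha_span x : alpha x = 0 -> in_span gen_elt x.
Proof.
move=> ax; have [_ [_ [_ exactness]]] := pres.
pose q : {linear N -> quot gen_elt} := mkQ gen_elt.
have fpQ : finpres (quot gen_elt) := finpresQ gen_elt fpN.
have [f hf] : exists f : {linear N' -> quot gen_elt}, forall x, q x = f (alpha x).
  apply/(exactness _ fpQ); rewrite pi_generic //.
  apply/matrixP => i j; rewrite (ord1 j) !mxE.
  by apply/mkQ0; exists 'e_i; rewrite lincomb_delta.
by apply/mkQ0; rewrite /= -/q hf ax linear0.
Qed.

Lemma generic_relation (y : 'rV[R]_m) :
  y *m B' = 0 -> lincomb gen_elt (y *m B) = 0.
Proof.
move=> yB'0; have [pp _] := pres.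
have [w' /matrixP hw] := pp N fpN idfun.
have rowB i : lincomb gen_elt (row i B) = - lincomb (fun j => w' j 0) (row i B').
  by move: (hw i 0); rewrite [LHS]mxE !mxactE mxE => /eqP; rewrite addr_eq0 => /eqP.
rewrite lincomb_mul; under eq_bigr do rewrite rowB scalerN.
by rewrite sumrN -lincomb_mul yB'0 linear0 oppr0.
Qed.

Lemma generic_relation_inv (v : 'rV[R]_k) :
  lincomb gen_elt v = 0 -> exists y : 'rV[R]_m, y *m B' = 0 /\ v = y *m B.
Proof.
move=> gv; have [_ [_ [surj _]]] := pres.
have fpC : finpres (free_realization B B') := finpresQ _ (finpres_row R (k + l)).
have [h hh] := surj _ fpC _ (free_point_pp B B').
have hw j : h (gen_elt j) = mkQ (rel_rows B B') 'e_(lshift l j).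
  by move: hh; rewrite pi_generic // => /matrixP /(_ j 0); rewrite !mxE.
apply: free_realization_rel; rewrite -(linear0 h) -gv row_mx_v0.
by rewrite /lincomb !linear_sum; apply: eq_bigr => j _; rewrite !linearZ /= hw.
Qed.

End Presentation.

Theorem mainTheorem3 (R : pzRingType) (m k l : nat)
  (B : 'M[R]_(m, k)) (B' : 'M[R]_(m, l))
  (N N' : lmodType R) (alpha : {linear N -> N'})
  (pi : forall M : lmodType R, {linear N -> M} -> 'cV[M]_k) :
  finpres N -> finpres N' -> is_pp_presentation B B' alpha pi ->
  exists g : {linear 'rV[R]_k -> N},
    (forall x : N, alpha x = 0 <-> exists v : 'rV[R]_k, g v = x) /\
    (forall v : 'rV[R]_k,
       g v = 0 <-> exists y : 'rV[R]_m, y *m B' = 0 /\ v = y *m B).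
Proof.
move=> fpN fpN' pres.
exists (lincomb (gen_elt pi) : {linear 'rV[R]_k -> N}); split => [x | v].
  split => [/(ker_alpha_span fpN pres) [c ->] | [v <-]]; first by exists c.
  exact: (alpha_lincomb fpN fpN' pres).
split; first exact: (generic_relation_inv fpN pres).
by move=> [y [yB'0 ->]]; apply: (generic_relation fpN pres).
Qed.
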